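(* The open $\frac{\pi}{2}$-thickening $B_{\frac{\pi}{2}}(\mathbb{S}^1,\mathbf{E}(\mathbb{S}^1))=\{f\in\mathbf{E}(\mathbb{S}^1):\exists\,\theta\in\mathbb{S}^1\text{ with }\|f-d_{\mathbb{S}^1}(\theta,\cdot)\|_\infty<\frac{\pi}{2}\}$ is contractible.
   Context: $\mathbb{S}^1=\mathbb{R}/2\pi$ with its geodesic metric $d_{\mathbb{S}^1}$. For a metric space $(X,d_X)$, $\Delta(X)=\{f:X\to\mathbb{R}\text{ bounded}: f(x)+f(x')\ge d_X(x,x')\ \forall x,x'\}$, and the tight span $\mathbf{E}(X)$ is the set of pointwise-minimal elements of $\Delta(X)$ with the sup-norm metric. $\mathbb{S}^1$ is regarded as a subspace of $\mathbf{E}(\mathbb{S}^1)$ via $\theta\mapsto d_{\mathbb{S}^1}(\theta,\cdot)$. *)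

From Stdlib Require Import Reals.
From Coquelicot Require Import Coquelicot.
Open Scope R_scope.

(* S^1 = R / 2pi Z, represented by the fundamental domain [0, 2pi). *)
Definition S1 : Type := { x : R | 0 <= x < 2 * PI }.

Definition dS1 (a b : S1) : R :=
  Rmin (Rabs (proj1_sig a - proj1_sig b)) (2 * PI - Rabs (proj1_sig a - proj1_sig b)).

Definition bounded_fun (f : S1 -> R) : Prop :=
  exists M : R, forall x, Rabs (f x) <= M.

Definition Delta (f : S1 -> R) : Prop :=
  bounded_fun f /\ forall x x' : S1, f x + f x' >= dS1 x x'.

Definition tight_span (f : S1 -> R) : Prop :=
  Delta f /\ forall g : S1 -> R, Delta g -> (forall x, g x <= f x) -> forall x, g x = f x.

Definition supdist (f g : S1 -> R) : Rbar :=
  Lub_Rbar (fun r => exists x : S1, r = Rabs (f x - g x)).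

Definition dist_fun (theta : S1) : S1 -> R := fun x => dS1 theta x.

Definition thickening (f : S1 -> R) : Prop :=
  tight_span f /\ exists theta : S1, Rbar_lt (supdist f (dist_fun theta)) (Finite (PI / 2)).

Definition contractible (X : (S1 -> R) -> Prop) : Prop :=
  exists (x0 : S1 -> R) (H : (S1 -> R) -> R -> (S1 -> R)),
    X x0 /\
    (forall f t, X f -> 0 <= t <= 1 -> X (H f t)) /\
    (forall f, X f -> H f 0 = f) /\
    (forall f, X f -> H f 1 = x0) /\
    (forall f t, X f -> 0 <= t <= 1 ->
       forall eps, 0 < eps -> exists delta, 0 < delta /\
         forall g s, X g -> 0 <= s <= 1 ->
           Rbar_lt (supdist f g) (Finite delta) -> Rabs (t - s) < delta ->
           Rbar_lt (supdist (H f t) (H g s)) (Finite eps)).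

(* A function f on S^1 lies in E(S^1) iff it is 1-Lipschitz and f(x) + f(-x) = pi
   for the antipode -x (minimality is tested by lowering f at one point). Such f is
   within pi/2 of d(theta, .) iff f(theta) < pi/2, so the thickening is E(S^1) minus
   the constant pi/2; E(S^1) itself is convex.
   The contraction first precomposes f with a degree-one map W_a of the circle that
   commutes with the antipode, is (1+a)-Lipschitz and, for a = 1, collapses the arc
   [0, pi/2] to a point, dividing f - pi/2 by 1 + a to stay in E(S^1); W_a is onto, so
   the constant pi/2 is never reached. It then moves linearly to d(0, .); this segment
   avoids the constant pi/2 because the squeezed function takes equal values at 0 and
   pi/4 while d(0, .) does not. *)

From Pilot Require Import Defs.
From Stdlib Require Import Reals Lra Psatz ProofIrrelevance FunctionalExtensionality.
From Coquelicot Require Import Coquelicot.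
Open Scope R_scope.

Lemma S1_ext (a b : S1) : proj1_sig a = proj1_sig b -> a = b.
Proof.
  destruct a as [a pa], b as [b pb]; simpl; intros ->.
  f_equal; apply proof_irrelevance.
Qed.

Ltac circle_cases := unfold dS1, Rmin in *; simpl in *; repeat destruct Rle_dec;
  unfold Rabs in *; repeat destruct Rcase_abs;
  repeat match goal with H : _ /\ _ |- _ => destruct H end; try split; try lra.

Lemma dS1_sym a b : dS1 a b = dS1 b a.
Proof. destruct a as [a pa], b as [b pb]; circle_cases. Qed.

Lemma dS1_refl a : dS1 a a = 0.
Proof. pose proof PI_RGT_0; destruct a as [a pa]; circle_cases. Qed.

Lemma dS1_triangle a b c : dS1 a c <= dS1 a b + dS1 b c.
Proof. pose proof PI_RGT_0; destruct a as [a pa], b as [b pb], c as [c pc]; circle_cases. Qed.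

Lemma dS1_bounds a b : 0 <= dS1 a b <= PI.
Proof. pose proof PI_RGT_0; destruct a as [a pa], b as [b pb]; circle_cases. Qed.

Lemma dS1_le_abs a b : dS1 a b <= Rabs (proj1_sig a - proj1_sig b).
Proof. pose proof PI_RGT_0; destruct a as [a pa], b as [b pb]; circle_cases. Qed.

Definition antipode_val (x : R) : R := if Rlt_dec x PI then x + PI else x - PI.

Lemma antipode_val_range x : 0 <= x < 2 * PI -> 0 <= antipode_val x < 2 * PI.
Proof. unfold antipode_val; destruct Rlt_dec; lra. Qed.

Definition antipode (x : S1) : S1 :=
  exist _ (antipode_val (proj1_sig x)) (antipode_val_range _ (proj2_sig x)).

Lemma dS1_antipode x y : dS1 x y + dS1 (antipode x) y = PI.
Proof.
  pose proof PI_RGT_0; destruct x as [x px], y as [y py]; unfold dS1, antipode; simpl.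
  unfold antipode_val; destruct Rlt_dec; circle_cases.
Qed.

Lemma dS1_antipode_self x : dS1 (antipode x) x = PI.
Proof. pose proof (dS1_antipode x x); rewrite dS1_refl in H; lra. Qed.

Definition lipschitz1 (f : S1 -> R) : Prop := forall x z, f x <= f z + dS1 x z.

Definition antipodal (f : S1 -> R) : Prop := forall x, f x + f (antipode x) = PI.

Lemma lipschitz1_abs f x z : lipschitz1 f -> Rabs (f x - f z) <= dS1 x z.
Proof.
  intros Hf; pose proof (Hf x z); pose proof (Hf z x); rewrite (dS1_sym z x) in *.
  apply Rabs_le; lra.
Qed.

Definition update (f : S1 -> R) (x : S1) (v : R) (y : S1) : R :=
  if Req_EM_T (proj1_sig y) (proj1_sig x) then v else f y.

Lemma Delta_update f x v :
  Defs.Delta f -> 0 <= v -> (forall y, dS1 x y <= v + f y) -> Defs.Delta (update f x v).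
Proof.
  intros [[M HM] Hf] Hv Hx; unfold update; split.
  - exists (Rmax M v); intros y; destruct Req_EM_T.
    + rewrite Rabs_right by lra; apply Rmax_r.
    + eapply Rle_trans; [apply HM | apply Rmax_l].
  - intros y y'.
    destruct Req_EM_T as [e|]; [apply S1_ext in e; subst y|];
    destruct Req_EM_T as [e'|]; try (apply S1_ext in e'; subst y').
    + rewrite dS1_refl; lra.
    + specialize (Hx y'); lra.
    + specialize (Hx y); rewrite dS1_sym; lra.
    + apply Hf.
Qed.

Lemma tight_span_le_at f x v :
  tight_span f -> 0 <= v -> (forall y, dS1 x y <= v + f y) -> f x <= v.
Proof.
  intros [Df Hmin] Hv Hx; apply Rnot_lt_le; intros Hlt.
  assert (Hle : forall y, update f x v y <= f y).
  { intros y; unfold update; destruct Req_EM_T as [e|]; [apply S1_ext in e; subst y|]; lra. }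
  pose proof (Hmin _ (Delta_update f x v Df Hv Hx) Hle x) as E.
  unfold update in E; destruct Req_EM_T as [|n]; [lra | now apply n].
Qed.

Lemma tight_span_ge0 f x : tight_span f -> 0 <= f x.
Proof. intros [[_ Hf] _]; pose proof (Hf x x); rewrite dS1_refl in *; lra. Qed.

Lemma tight_span_le_PI f x : tight_span f -> f x <= PI.
Proof.
  intros Tf; apply (tight_span_le_at f x); [exact Tf | pose proof PI_RGT_0; lra |].
  intros y; pose proof (dS1_bounds x y); pose proof (tight_span_ge0 f y Tf); lra.
Qed.

Lemma tight_span_lipschitz1 f : tight_span f -> lipschitz1 f.
Proof.
  intros Tf x z; apply (tight_span_le_at f x); [exact Tf | |].
  - pose proof (tight_span_ge0 f z Tf); pose proof (dS1_bounds x z); lra.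
  - intros y; pose proof (dS1_triangle x z y); destruct Tf as [[_ Hf] _].
    pose proof (Hf z y); lra.
Qed.

Lemma tight_span_antipodal f : tight_span f -> antipodal f.
Proof.
  intros Tf x; apply Rle_antisym.
  - enough (f x <= PI - f (antipode x)) by lra.
    pose proof (tight_span_le_PI f (antipode x) Tf).
    apply (tight_span_le_at f x); [exact Tf | lra |].
    intros y; pose proof (tight_span_lipschitz1 f Tf (antipode x) y).
    pose proof (dS1_antipode x y); lra.
  - destruct Tf as [[_ Hf] _]; pose proof (Hf x (antipode x)).
    rewrite dS1_sym, dS1_antipode_self in *; lra.
Qed.

Lemma tight_span_of f : lipschitz1 f -> antipodal f -> tight_span f.
Proof.
  intros Lf Af.
  assert (Hf : forall x y, f x + f y >= dS1 x y).
  { intros x y; pose proof (Af x); pose proof (Lf (antipode x) y).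
    pose proof (dS1_antipode x y); lra. }
  split; [split|].
  - exists PI; intros x; pose proof (Hf x x); pose proof (Hf (antipode x) (antipode x)).
    pose proof (Af x); rewrite dS1_refl in *; apply Rabs_le; lra.
  - exact Hf.
  - intros g [_ Hg] Hle x; apply Rle_antisym; [apply Hle|].
    pose proof (Hg x (antipode x)); pose proof (Hle (antipode x)); pose proof (Af x).
    rewrite dS1_sym, dS1_antipode_self in *; lra.
Qed.

Lemma supdist_le F G c : (forall x, Rabs (F x - G x) <= c) -> Rbar_le (supdist F G) (Finite c).
Proof.
  intros H; unfold supdist.
  destruct (Lub_Rbar_correct (fun r => exists x : S1, r = Rabs (F x - G x))) as [_ Hlub].
  apply Hlub; intros r [x ->]; apply H.
Qed.

Lemma supdist_lt_at F G d x : Rbar_lt (supdist F G) (Finite d) -> Rabs (F x - G x) < d.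
Proof.
  unfold supdist.
  destruct (Lub_Rbar_correct (fun r => exists x : S1, r = Rabs (F x - G x))) as [Hub _].
  intros H; refine (Rbar_le_lt_trans (Finite _) _ (Finite d) _ H).
  apply Hub; now exists x.
Qed.

(* For tight [f], [f theta] is exactly the sup-distance from [f] to [dS1 theta]. *)
Lemma thickening_of_lt f theta : tight_span f -> f theta < PI / 2 -> thickening f.
Proof.
  intros Tf Hlt; split; [exact Tf|]; exists theta.
  apply Rbar_le_lt_trans with (Finite (f theta)); [|exact Hlt].
  apply supdist_le; intros x; unfold dist_fun.
  pose proof (tight_span_lipschitz1 f Tf x theta); destruct Tf as [[_ Hf] _].
  pose proof (Hf theta x); rewrite (dS1_sym theta x) in *; apply Rabs_le; lra.
Qed.

Lemma thickening_lt f : thickening f -> exists theta, f theta < PI / 2.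
Proof.
  intros [_ [theta H]]; exists theta.
  pose proof (supdist_lt_at _ _ _ theta H) as Hth; unfold dist_fun in Hth.
  rewrite dS1_refl, Rminus_0_r in Hth; pose proof (Rle_abs (f theta)); lra.
Qed.

Lemma thickening_of_neq f u : tight_span f -> f u <> PI / 2 -> thickening f.
Proof.
  intros Tf Hu; pose proof (tight_span_antipodal f Tf u).
  destruct (Rlt_dec (f u) (PI / 2)).
  - exact (thickening_of_lt f u Tf r).
  - apply (thickening_of_lt f (antipode u) Tf); lra.
Qed.

Definition clamp01 (a : R) : R := Rmax 0 (Rmin a 1).

Lemma clamp01_range a : 0 <= clamp01 a <= 1.
Proof. unfold clamp01, Rmax, Rmin; repeat destruct Rle_dec; lra. Qed.

Lemma clamp01_le0 a : a <= 0 -> clamp01 a = 0.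
Proof. unfold clamp01, Rmax, Rmin; repeat destruct Rle_dec; lra. Qed.

Lemma clamp01_ge1 a : 1 <= a -> clamp01 a = 1.
Proof. unfold clamp01, Rmax, Rmin; repeat destruct Rle_dec; lra. Qed.

Lemma clamp01_lipschitz a b : Rabs (clamp01 a - clamp01 b) <= Rabs (a - b).
Proof.
  unfold clamp01, Rmax, Rmin; repeat destruct Rle_dec; unfold Rabs; repeat destruct Rcase_abs; lra.
Qed.

(* Distance from [x] in [[0, 2 PI)] to the poles [0], [PI], [2 PI]. *)
Definition pole_dist (x : R) : R :=
  if Rlt_dec x PI then PI / 2 - Rabs (x - PI / 2) else PI / 2 - Rabs (x - 3 * PI / 2).

(* [warp a] fixes the poles, is affine on each quarter circle and, for [a = 1],
   collapses [[0, PI/2]] to [0] and [[PI, 3 PI/2]] to [PI]. *)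
Definition warp (a x : R) : R := x - clamp01 a * pole_dist x.

Lemma pole_dist_bounds x : 0 <= x < 2 * PI ->
  0 <= pole_dist x <= PI / 2 /\ (x < PI -> pole_dist x <= x) /\ (PI <= x -> pole_dist x <= x - PI).
Proof.
  intros [? ?]; pose proof PI_RGT_0; unfold pole_dist; destruct Rlt_dec; unfold Rabs;
  repeat destruct Rcase_abs; repeat split; intros; lra.
Qed.

Lemma pole_dist_lipschitz x y : 0 <= x -> x <= y -> y < 2 * PI ->
  Rabs (pole_dist y - pole_dist x) <= Rmin (y - x) (x + 2 * PI - y).
Proof.
  intros; pose proof PI_RGT_0; unfold pole_dist, Rmin; repeat destruct Rlt_dec;
  destruct Rle_dec; unfold Rabs; repeat destruct Rcase_abs; lra.
Qed.

Lemma warp_range a x : 0 <= x < 2 * PI -> 0 <= warp a x < 2 * PI /\ (x < PI <-> warp a x < PI).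
Proof.
  intros Hx; pose proof (pole_dist_bounds x Hx) as [[? ?] [Hlo Hhi]].
  pose proof (clamp01_range a); unfold warp.
  assert (0 <= clamp01 a * pole_dist x <= pole_dist x) by nra.
  destruct (Rlt_dec x PI) as [h|h].
  - specialize (Hlo h); repeat split; intros; lra.
  - assert (Hp : PI <= x) by lra; specialize (Hhi Hp); repeat split; intros; lra.
Qed.

Definition Warp (a : R) (x : S1) : S1 :=
  exist _ (warp a (proj1_sig x)) (proj1 (warp_range a _ (proj2_sig x))).

Lemma Warp_antipode a x : Warp a (antipode x) = antipode (Warp a x).
Proof.
  apply S1_ext; destruct x as [x Hx]; unfold Warp, antipode; simpl.
  pose proof (warp_range a x Hx) as [_ Hiff]; unfold antipode_val.
  destruct (Rlt_dec x PI) as [h|h]; destruct (Rlt_dec (warp a x) PI) as [h'|h'];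
    try tauto; unfold warp, pole_dist.
  - destruct (Rlt_dec (x + PI) PI); [lra|]; destruct (Rlt_dec x PI); [|lra].
    replace (x + PI - 3 * PI / 2) with (x - PI / 2) by lra; lra.
  - destruct (Rlt_dec (x - PI) PI); [|destruct Hx; lra]; destruct (Rlt_dec x PI); [lra|].
    replace (x - PI - PI / 2) with (x - 3 * PI / 2) by lra; lra.
Qed.

Lemma warp_increment a x y : 0 <= x -> x <= y -> y < 2 * PI ->
  0 <= warp a y - warp a x <= (1 + clamp01 a) * (y - x) /\
  0 <= 2 * PI - (warp a y - warp a x) <= (1 + clamp01 a) * (x + 2 * PI - y).
Proof.
  intros Hx Hxy Hy; pose proof (pole_dist_lipschitz x y Hx Hxy Hy) as Hp.
  pose proof (clamp01_range a); unfold warp, Rmin in *.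
  set (c := clamp01 a) in *; set (u := pole_dist y - pole_dist x) in *.
  assert (Hu : Rabs u <= y - x /\ Rabs u <= x + 2 * PI - y) by (destruct Rle_dec; lra).
  destruct Hu as [[? ?]%Rabs_le_between [? ?]%Rabs_le_between].
  replace (y - c * pole_dist y - (x - c * pole_dist x)) with ((y - x) - c * u) by (unfold u; ring).
  repeat split; nra.
Qed.

Lemma Warp_lipschitz a x y : dS1 (Warp a x) (Warp a y) <= (1 + clamp01 a) * dS1 x y.
Proof.
  assert (ordered : forall x y : S1, proj1_sig x <= proj1_sig y ->
            dS1 (Warp a x) (Warp a y) <= (1 + clamp01 a) * dS1 x y).
  { clear x y; intros [x [Hx1 Hx2]] [y [Hy1 Hy2]]; simpl; intros Hxy.
    destruct (warp_increment a x y Hx1 Hxy Hy2) as [[? ?] [? ?]].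
    pose proof (clamp01_range a); unfold dS1; simpl.
    rewrite (Rabs_minus_sym (warp a x)), (Rabs_minus_sym x), !Rabs_right by lra.
    unfold Rmin; destruct Rle_dec; destruct Rle_dec; nra. }
  destruct (Rle_dec (proj1_sig x) (proj1_sig y)).
  - now apply ordered.
  - rewrite dS1_sym, (dS1_sym x); apply ordered; lra.
Qed.

Lemma Warp_time a b x : dS1 (Warp a x) (Warp b x) <= Rabs (clamp01 a - clamp01 b) * (PI / 2).
Proof.
  eapply Rle_trans; [apply dS1_le_abs|]; destruct x as [x Hx]; simpl; unfold warp.
  replace (x - clamp01 a * pole_dist x - (x - clamp01 b * pole_dist x))
    with (- ((clamp01 a - clamp01 b) * pole_dist x)) by ring.
  rewrite Rabs_Ropp, Rabs_mult; apply Rmult_le_compat_l; [apply Rabs_pos|].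
  pose proof (pole_dist_bounds x Hx) as [[? ?] _]; rewrite Rabs_right; lra.
Qed.

Lemma Warp_0 x : Warp 0 x = x.
Proof. apply S1_ext; unfold Warp, warp; simpl; rewrite clamp01_le0 by lra; ring. Qed.

Lemma warp_onto_half a v : 0 <= v < PI -> exists x, 0 <= x < PI /\ warp a x = v.
Proof.
  intros Hv; pose proof PI_RGT_0; pose proof (clamp01_range a); unfold warp, pole_dist.
  set (c := clamp01 a) in *.
  destruct (Rlt_dec v ((1 - c) * (PI / 2))).
  - assert (Hc : 0 < 1 - c) by nra.
    assert (Hx : 0 <= v / (1 - c) < PI / 2).
    { split; [apply Rdiv_le_0_compat; lra|].
      apply (Rmult_lt_reg_r (1 - c)); [lra|].
      replace (v / (1 - c) * (1 - c)) with v by (field; lra); lra. }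
    exists (v / (1 - c)); split; [lra|]; destruct Rlt_dec; [|lra].
    rewrite Rabs_left by lra; field; lra.
  - assert (Hx : PI / 2 <= (v + c * PI) / (1 + c) < PI).
    { assert (E : (v + c * PI) / (1 + c) * (1 + c) = v + c * PI) by (field; lra).
      split; [apply (Rmult_le_reg_r (1 + c)) | apply (Rmult_lt_reg_r (1 + c))]; rewrite ?E; nra. }
    exists ((v + c * PI) / (1 + c)); split; [lra|]; destruct Rlt_dec; [|lra].
    rewrite Rabs_right by lra; field; lra.
Qed.

Lemma Warp_surjective a y : exists x, Warp a x = y.
Proof.
  destruct y as [v Hv]; pose proof PI_RGT_0.
  destruct (Rlt_dec v PI).
  - destruct (warp_onto_half a v) as [x [Hx E]]; [lra|].
    assert (Hx' : 0 <= x < 2 * PI) by lra.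
    exists (exist _ x Hx'); apply S1_ext; exact E.
  - destruct (warp_onto_half a (v - PI)) as [x [Hx E]]; [lra|].
    assert (Hx' : 0 <= x < 2 * PI) by lra.
    exists (antipode (exist _ x Hx')); rewrite Warp_antipode; apply S1_ext.
    unfold antipode, Warp, antipode_val; simpl; rewrite E.
    destruct Rlt_dec; lra.
Qed.

Lemma zero_range : 0 <= 0 < 2 * PI.
Proof. pose proof PI_RGT_0; lra. Qed.

Lemma quarter_pi_range : 0 <= PI / 4 < 2 * PI.
Proof. pose proof PI_RGT_0; lra. Qed.

Definition p0 : S1 := exist _ 0 zero_range.
Definition q0 : S1 := exist _ (PI / 4) quarter_pi_range.

Lemma dS1_p0_q0 : dS1 p0 q0 = PI / 4.
Proof. pose proof PI_RGT_0; unfold p0, q0; circle_cases. Qed.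

Lemma Warp_collapse a : 1 <= a -> Warp a p0 = Warp a q0.
Proof.
  intros Ha; pose proof PI_RGT_0; apply S1_ext; unfold Warp, warp, pole_dist; simpl.
  rewrite clamp01_ge1 by lra; repeat destruct Rlt_dec; try lra.
  rewrite !Rabs_left by lra; lra.
Qed.

Lemma Rabs_mult_le x y a b : Rabs x <= a -> Rabs y <= b -> Rabs (x * y) <= a * b.
Proof. intros; rewrite Rabs_mult; apply Rmult_le_compat; auto using Rabs_pos. Qed.

Lemma Rabs_inv_le_1 x : 1 <= x -> Rabs (/ x) <= 1.
Proof.
  intros; rewrite Rabs_right.
  - rewrite <- Rinv_1; apply Rinv_le_contravar; lra.
  - apply Rle_ge, Rlt_le, Rinv_0_lt_compat; lra.
Qed.

Lemma dist_fun_tight theta : tight_span (dist_fun theta).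
Proof.
  apply tight_span_of; unfold dist_fun.
  - intros x z; pose proof (dS1_triangle theta z x); rewrite (dS1_sym z x) in *; lra.
  - intros x; pose proof (dS1_antipode x theta); rewrite !(dS1_sym _ theta) in *; lra.
Qed.

Definition squeeze (a : R) (f : S1 -> R) (x : S1) : R :=
  PI / 2 + (f (Warp a x) - PI / 2) / (1 + clamp01 a).

Lemma squeeze_tight a f : tight_span f -> tight_span (squeeze a f).
Proof.
  intros Tf; pose proof (tight_span_lipschitz1 f Tf) as Lf.
  pose proof (tight_span_antipodal f Tf) as Af.
  pose proof (clamp01_range a); apply tight_span_of; unfold squeeze.
  - intros x z; pose proof (Lf (Warp a x) (Warp a z)); pose proof (Warp_lipschitz a x z).
    enough ((f (Warp a x) - f (Warp a z)) / (1 + clamp01 a) <= dS1 x z)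
      by (unfold Rdiv in *; lra).
    apply Rle_div_l; lra.
  - intros x; rewrite Warp_antipode; pose proof (Af (Warp a x)).
    replace (f (antipode (Warp a x))) with (PI - f (Warp a x)) by lra; field; lra.
Qed.

Lemma squeeze_thickening a f : thickening f -> thickening (squeeze a f).
Proof.
  intros Hf; destruct (thickening_lt f Hf) as [theta Htheta].
  destruct (Warp_surjective a theta) as [y Hy].
  apply (thickening_of_lt _ y (squeeze_tight a f (proj1 Hf))); unfold squeeze; rewrite Hy.
  pose proof (clamp01_range a).
  enough ((f theta - PI / 2) / (1 + clamp01 a) < 0) by lra.
  apply Rdiv_neg_pos; lra.
Qed.

Lemma squeeze_0 f : squeeze 0 f = f.
Proof.
  apply functional_extensionality; intros x; unfold squeeze.
  rewrite Warp_0, clamp01_le0 by lra; field.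
Qed.

Lemma squeeze_collapse a f : 1 <= a -> squeeze a f p0 = squeeze a f q0.
Proof. intros Ha; unfold squeeze; now rewrite Warp_collapse. Qed.

Lemma squeeze_nonexpansive a f g e x :
  (forall y, Rabs (f y - g y) <= e) -> Rabs (squeeze a f x - squeeze a g x) <= e.
Proof.
  intros Hfg; pose proof (clamp01_range a); unfold squeeze.
  replace (PI / 2 + (f (Warp a x) - PI / 2) / (1 + clamp01 a) -
           (PI / 2 + (g (Warp a x) - PI / 2) / (1 + clamp01 a)))
    with ((f (Warp a x) - g (Warp a x)) * / (1 + clamp01 a)) by (field; lra).
  rewrite <- (Rmult_1_r e); apply Rabs_mult_le; [apply Hfg|].
  apply Rabs_inv_le_1; lra.
Qed.

Lemma squeeze_time a b f x :
  tight_span f -> Rabs (squeeze a f x - squeeze b f x) <= PI * Rabs (clamp01 a - clamp01 b).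
Proof.
  intros Tf; pose proof (clamp01_range a); pose proof (clamp01_range b); unfold squeeze.
  set (A := clamp01 a) in *; set (B := clamp01 b) in *.
  set (w := Warp a x); set (w' := Warp b x).
  assert (Hw : Rabs (f w - f w') <= Rabs (A - B) * (PI / 2)).
  { eapply Rle_trans; [apply lipschitz1_abs, tight_span_lipschitz1, Tf | apply Warp_time]. }
  assert (Hw' : Rabs (f w' - PI / 2) <= PI / 2).
  { pose proof (tight_span_ge0 f w' Tf); pose proof (tight_span_le_PI f w' Tf).
    apply Rabs_le; lra. }
  assert (Hk : Rabs (/ (1 + A)) <= 1).
  { apply Rabs_inv_le_1; lra. }
  assert (Hkk : Rabs (/ (1 + A) - / (1 + B)) <= Rabs (A - B)).
  { replace (/ (1 + A) - / (1 + B)) with ((A - B) * - / ((1 + A) * (1 + B))) by (field; lra).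
    rewrite <- (Rmult_1_r (Rabs (A - B))); apply Rabs_mult_le; [lra|].
    rewrite Rabs_Ropp; apply Rabs_inv_le_1; nra. }
  replace (PI / 2 + (f w - PI / 2) / (1 + A) - (PI / 2 + (f w' - PI / 2) / (1 + B)))
    with ((f w - f w') * / (1 + A) + (f w' - PI / 2) * (/ (1 + A) - / (1 + B))) by (field; lra).
  eapply Rle_trans; [apply Rabs_triang|].
  pose proof (Rabs_mult_le _ _ _ _ Hw Hk); pose proof (Rabs_mult_le _ _ _ _ Hw' Hkk); lra.
Qed.

Definition blend (b : R) (g h : S1 -> R) (x : S1) : R := (1 - b) * g x + b * h x.

Lemma blend_tight b g h : 0 <= b <= 1 -> tight_span g -> tight_span h -> tight_span (blend b g h).
Proof.
  intros Hb Tg Th; apply tight_span_of; unfold blend.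
  - intros x z; pose proof (tight_span_lipschitz1 g Tg x z).
    pose proof (tight_span_lipschitz1 h Th x z).
    nra.
  - intros x; pose proof (tight_span_antipodal g Tg x); pose proof (tight_span_antipodal h Th x).
    nra.
Qed.

Lemma blend_thickening b g : 0 <= b <= 1 -> thickening g -> (0 < b -> g p0 = g q0) ->
  thickening (blend b g (dist_fun p0)).
Proof.
  intros Hb Hg Hcollapse.
  pose proof (blend_tight b g _ Hb (proj1 Hg) (dist_fun_tight p0)) as T.
  destruct (Req_dec b 0) as [->|Hb0].
  - destruct (thickening_lt g Hg) as [theta Htheta].
    apply (thickening_of_lt _ theta T); unfold blend; lra.
  - destruct (Req_dec (blend b g (dist_fun p0) p0) (PI / 2)) as [E|E].
    + apply (thickening_of_neq _ q0 T); unfold blend, dist_fun in *.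
      rewrite dS1_refl in E; rewrite <- Hcollapse, dS1_p0_q0 by lra.
      pose proof PI_RGT_0; nra.
    + exact (thickening_of_neq _ p0 T E).
Qed.

Lemma blend_diff b b' g g' h x : 0 <= b <= 1 ->
  Rabs (blend b g h x - blend b' g' h x) <= Rabs (g x - g' x) + Rabs (b - b') * Rabs (h x - g' x).
Proof.
  intros Hb; unfold blend.
  replace ((1 - b) * g x + b * h x - ((1 - b') * g' x + b' * h x))
    with ((1 - b) * (g x - g' x) + (b - b') * (h x - g' x)) by ring.
  eapply Rle_trans; [apply Rabs_triang|]; rewrite !Rabs_mult.
  rewrite (Rabs_right (1 - b)) by lra; pose proof (Rabs_pos (g x - g' x)); nra.
Qed.

Definition contraction (f : S1 -> R) (t : R) : S1 -> R :=
  blend (clamp01 (2 * t - 1)) (squeeze (2 * t) f) (dist_fun p0).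

Lemma dist_fun_thickening theta : thickening (dist_fun theta).
Proof.
  apply (thickening_of_lt _ theta (dist_fun_tight theta)); unfold dist_fun.
  rewrite dS1_refl; pose proof PI_RGT_0; lra.
Qed.

Lemma contraction_thickening f t : thickening f -> thickening (contraction f t).
Proof.
  intros Hf; apply blend_thickening; [apply clamp01_range | now apply squeeze_thickening |].
  intros Hb; apply squeeze_collapse.
  destruct (Rle_dec (2 * t) 1); [rewrite clamp01_le0 in Hb|]; lra.
Qed.

Lemma contraction_0 f : contraction f 0 = f.
Proof.
  apply functional_extensionality; intros x; unfold contraction, blend.
  rewrite Rmult_0_r, squeeze_0, clamp01_le0 by lra; ring.
Qed.

Lemma contraction_1 f : contraction f 1 = dist_fun p0.
Proof.
  apply functional_extensionality; intros x; unfold contraction, blend.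
  rewrite clamp01_ge1 by lra; ring.
Qed.

Lemma contraction_time f t s x : tight_span f ->
  Rabs (contraction f t x - contraction f s x) <= 4 * PI * Rabs (t - s).
Proof.
  intros Tf; unfold contraction.
  eapply Rle_trans; [apply blend_diff, clamp01_range|].
  pose proof (squeeze_time (2 * t) (2 * s) f x Tf).
  pose proof (clamp01_lipschitz (2 * t) (2 * s)).
  pose proof (clamp01_lipschitz (2 * t - 1) (2 * s - 1)).
  assert (Hd : Rabs (dist_fun p0 x - squeeze (2 * s) f x) <= PI).
  { pose proof (squeeze_tight (2 * s) f Tf) as Ts; unfold dist_fun.
    pose proof (tight_span_ge0 _ x Ts); pose proof (tight_span_le_PI _ x Ts).
    pose proof (dS1_bounds p0 x); apply Rabs_le; lra. }
  replace (2 * t - 1 - (2 * s - 1)) with (2 * (t - s)) in * by ring.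
  replace (2 * t - 2 * s) with (2 * (t - s)) in * by ring.
  rewrite Rabs_mult, (Rabs_right 2) in * by lra.
  pose proof PI_RGT_0; pose proof (Rabs_pos (t - s));
  pose proof (Rabs_pos (clamp01 (2 * t - 1) - clamp01 (2 * s - 1))); nra.
Qed.

Lemma contraction_nonexpansive f g t e x :
  (forall y, Rabs (f y - g y) <= e) -> Rabs (contraction f t x - contraction g t x) <= e.
Proof.
  intros Hfg; unfold contraction.
  eapply Rle_trans; [apply blend_diff, clamp01_range|].
  rewrite Rminus_diag, Rabs_R0, Rmult_0_l, Rplus_0_r; now apply squeeze_nonexpansive.
Qed.

Lemma contraction_lipschitz f g t s e x : tight_span f ->
  (forall y, Rabs (f y - g y) <= e) ->
  Rabs (contraction f t x - contraction g s x) <= 4 * PI * Rabs (t - s) + e.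
Proof.
  intros Tf Hfg.
  replace (contraction f t x - contraction g s x)
    with ((contraction f t x - contraction f s x)
          + (contraction f s x - contraction g s x)) by ring.
  eapply Rle_trans; [apply Rabs_triang|].
  apply Rplus_le_compat; [now apply contraction_time | now apply contraction_nonexpansive].
Qed.

Theorem proposition3p22 : contractible thickening.
Proof.
  exists (dist_fun p0), contraction.
  split; [apply dist_fun_thickening|].
  split; [intros f t Hf _; now apply contraction_thickening|].
  split; [intros f _; apply contraction_0|].
  split; [intros f _; apply contraction_1|].
  intros f t Hf _ eps Heps; pose proof PI_RGT_0.
  set (delta := eps / (2 * (4 * PI + 1))).
  assert (Hdelta : 0 < delta) by (apply Rdiv_lt_0_compat; lra).
  assert (Edelta : (4 * PI + 1) * delta = eps / 2) by (unfold delta; field; lra).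
  exists delta; split; [exact Hdelta|]; intros g s _ _ Hfg Hts.
  apply Rbar_le_lt_trans with (Finite (eps / 2)); [|simpl; lra].
  apply supdist_le; intros x.
  assert (Hgap : forall y, Rabs (f y - g y) <= delta) by (intros y; left; now apply supdist_lt_at).
  pose proof (contraction_lipschitz f g t s delta x (proj1 Hf) Hgap); nra.
Qed.
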